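(* For a 2-group $\mathbb G$ the following are equivalent: (1) $\mathbb G$ is split; (2) there exist a map $s:\pi_0(\mathbb G)\to\mathrm{Ob}\,\mathcal G$ with $s[x]\in[x]$ and $s[e]=e$, and isomorphisms $\mu_{[x],[x']}:s[x]\otimes s[x']\to s[x\otimes x']$ for all $[x],[x']\in\pi_0(\mathbb G)$, such that for all $[x],[x'],[x'']$: $\mu_{[x\otimes x'],[x'']}\circ(\mu_{[x],[x']}\otimes id)\circ a_{s[x],s[x'],s[x'']}=\mu_{[x],[x'\otimes x'']}\circ(id\otimes\mu_{[x'],[x'']})$; (3) the Postnikov sequence $\mathbb 1\to\pi_1(\mathbb G)[1]\xrightarrow{\mathbb J}\mathbb G\xrightarrow{\mathbb P}\pi_0(\mathbb G)[0]\to\mathbb 1$ splits, i.e. there exists a morphism of 2-groups $\mathbb S:\pi_0(\mathbb G)[0]\to\mathbb G$ with $\mathbb P\circ\mathbb S$ isomorphic (by a monoidal natural isomorphism) to the identity of $\pi_0(\mathbb G)[0]$.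
   Context: A 2-group is a monoidal groupoid $(\mathcal G,\otimes,e,a,l,r)$ in which every object has a weak tensor inverse; morphisms of 2-groups are strong monoidal functors. $\pi_0(\mathbb G)$ is the group of isomorphism classes of objects with $[x][y]=[x\otimes y]$; $\pi_1(\mathbb G)=\mathrm{Aut}(e)$. For a group $\mathsf G$, $\mathsf G[0]$ is the discrete 2-group; for an abelian group $\mathsf A$, $\mathsf A[1]$ is the one-object 2-group with composition and tensor both the group law. $\mathbb J$ is the strict morphism including $\pi_1(\mathbb G)[1]$ as the automorphisms of $e$, and $\mathbb P$ is the strict morphism sending each object to its isomorphism class. For a group $\mathsf G$ and left $\mathsf G$-module $\mathsf A$, the elementary 2-group $\mathsf A[1]\rtimes\mathsf G[0]$ is the strict 2-group with objects the elements of $\mathsf G$, morphisms $(a,g):g\to g$, composition $(a',g)\circ(a,g)=(a'+a,g)$, tensor $g\otimes g'=gg'$, $(a,g)\otimes(a',g')=(a+g\lhd a',gg')$. A 2-group is split if it is equivalent (monoidal functor with pseudo-inverse up to monoidal natural isomorphism) to an elementary 2-group. *)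

From Stdlib Require Import Classical ClassicalEpsilon FunctionalExtensionality
  PropExtensionality ProofIrrelevance.

Set Implicit Arguments.

(* Data of a monoidal groupoid.  Morphisms are compared with Leibniz   *)
(* equality.  Conventions (as in the paper's coherence equation):      *)
(*   comp g f = g o f,                                                 *)
(*   assoc x y z : x (x) (y (x) z) -> (x (x) y) (x) z,                  *)
Record TwoGroupData := {
  ob : Type;
  hom : ob -> ob -> Type;
  idm : forall x, hom x x;
  comp : forall x y z, hom y z -> hom x y -> hom x z;
  tens : ob -> ob -> ob;
  tensm : forall x x' y y', hom x y -> hom x' y' -> hom (tens x x') (tens y y');
  unit : ob;
  assoc : forall x y z, hom (tens x (tens y z)) (tens (tens x y) z);
  lunit : forall x, hom (tens unit x) x;
  runit : forall x, hom (tens x unit) x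
}.

Arguments hom {t} _ _.
Arguments idm {t} _.
Arguments comp {t x y z} _ _.
Arguments tens {t} _ _.
Arguments tensm {t x x' y y'} _ _.
Arguments unit {t}.
Arguments assoc {t} _ _ _.
Arguments lunit {t} _.
Arguments runit {t} _.

Record is_2group (G : TwoGroupData) : Prop := {
  comp_id_l : forall (x y : ob G) (f : hom x y), comp (idm y) f = f;
  comp_id_r : forall (x y : ob G) (f : hom x y), comp f (idm x) = f;
  comp_assoc : forall (w x y z : ob G) (h : hom y z) (g : hom x y) (f : hom w x),
      comp h (comp g f) = comp (comp h g) f;
  groupoid : forall (x y : ob G) (f : hom x y),
      exists g : hom y x, comp g f = idm x /\ comp f g = idm y;
  tensm_id : forall x y : ob G, tensm (idm x) (idm y) = idm (tens x y);
  tensm_comp : forall (x x' y y' z z' : ob G) (g : hom y z) (g' : hom y' z')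
      (f : hom x y) (f' : hom x' y'),
      tensm (comp g f) (comp g' f') = comp (tensm g g') (tensm f f');
  assoc_nat : forall (x x' x'' y y' y'' : ob G) (f : hom x y) (f' : hom x' y')
      (f'' : hom x'' y''),
      comp (assoc y y' y'') (tensm f (tensm f' f''))
      = comp (tensm (tensm f f') f'') (assoc x x' x'');
  lunit_nat : forall (x y : ob G) (f : hom x y),
      comp (lunit y) (tensm (idm unit) f) = comp f (lunit x);
  runit_nat : forall (x y : ob G) (f : hom x y),
      comp (runit y) (tensm f (idm unit)) = comp f (runit x);
  pentagon : forall w x y z : ob G,
      comp (assoc (tens w x) y z) (assoc w x (tens y z))
      = comp (tensm (assoc w x y) (idm z))
          (comp (assoc w (tens x y) z) (tensm (idm w) (assoc x y z)));
  triangle : forall x y : ob G,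
      comp (tensm (runit x) (idm y)) (assoc x unit y) = tensm (idm x) (lunit y);
  weak_inv : forall x : ob G, exists y : ob G,
      inhabited (hom (tens x y) unit) /\ inhabited (hom (tens y x) unit)
}.

Record TwoGroup := { tg_data :> TwoGroupData; tg_laws : is_2group tg_data }.

(* Morphisms of 2-groups = strong monoidal functors.                   *)
(* (In a groupoid every morphism is invertible, so the structure maps  *)
(*  are automatically isomorphisms.)                                   *)
Record MonFunData (G H : TwoGroupData) := {
  fob : ob G -> ob H;
  fhom : forall x y : ob G, hom x y -> hom (fob x) (fob y);
  fmu : forall x y : ob G, hom (tens (fob x) (fob y)) (fob (tens x y));
  feta : hom (@unit H) (fob unit)
}.
Arguments fob {G H} _ _.
Arguments fhom {G H} _ {x y} _.
Arguments fmu {G H} _ _ _.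
Arguments feta {G H} _.

Record is_monfun (G H : TwoGroupData) (F : MonFunData G H) : Prop := {
  fhom_id : forall x : ob G, fhom F (idm x) = idm (fob F x);
  fhom_comp : forall (x y z : ob G) (g : hom y z) (f : hom x y),
      fhom F (comp g f) = comp (fhom F g) (fhom F f);
  fmu_nat : forall (x x' y y' : ob G) (f : hom x y) (f' : hom x' y'),
      comp (fmu F y y') (tensm (fhom F f) (fhom F f'))
      = comp (fhom F (tensm f f')) (fmu F x x');
  fmu_assoc : forall x y z : ob G,
      comp (fhom F (assoc x y z)) (comp (fmu F x (tens y z)) (tensm (idm (fob F x)) (fmu F y z)))
      = comp (fmu F (tens x y) z)
          (comp (tensm (fmu F x y) (idm (fob F z))) (assoc (fob F x) (fob F y) (fob F z)));
  fmu_lunit : forall x : ob G,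
      comp (fhom F (lunit x)) (comp (fmu F unit x) (tensm (feta F) (idm (fob F x))))
      = lunit (fob F x);
  fmu_runit : forall x : ob G,
      comp (fhom F (runit x)) (comp (fmu F x unit) (tensm (idm (fob F x)) (feta F)))
      = runit (fob F x)
}.

Definition Mor (G H : TwoGroupData) := { F : MonFunData G H | is_monfun F }.

Definition id_data (G : TwoGroupData) : MonFunData G G :=
  {| fob := fun x => x; fhom := fun x y f => f;
     fmu := fun x y => idm (tens x y); feta := idm unit |}.

Definition comp_data (G H K : TwoGroupData) (F : MonFunData G H) (L : MonFunData H K)
  : MonFunData G K :=
  {| fob := fun x => fob L (fob F x);
     fhom := fun x y f => fhom L (fhom F f);
     fmu := fun x y => comp (fhom L (fmu F x y)) (fmu L (fob F x) (fob F y));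
     feta := comp (fhom L (feta F)) (feta L) |}.

(* Monoidal natural transformations; in a groupoid these are automatically *)
(* monoidal natural isomorphisms.                                         *)
Definition is_monnat (G H : TwoGroupData) (F F' : MonFunData G H)
  (th : forall x : ob G, hom (fob F x) (fob F' x)) : Prop :=
  (forall (x y : ob G) (f : hom x y), comp (fhom F' f) (th x) = comp (th y) (fhom F f))
  /\ (forall x y : ob G, comp (th (tens x y)) (fmu F x y) = comp (fmu F' x y) (tensm (th x) (th y)))
  /\ comp (th unit) (feta F) = feta F'.

Definition mon_iso (G H : TwoGroupData) (F F' : MonFunData G H) : Prop :=
  exists th : forall x : ob G, hom (fob F x) (fob F' x), is_monnat F F' th.

Definition equiv2 (G H : TwoGroupData) : Prop :=
  exists (F : Mor G H) (K : Mor H G),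
    mon_iso (comp_data (proj1_sig F) (proj1_sig K)) (id_data G)
    /\ mon_iso (comp_data (proj1_sig K) (proj1_sig F)) (id_data H).

Record Group := {
  gcar : Type;
  gmul : gcar -> gcar -> gcar;
  gone : gcar;
  ginv : gcar -> gcar;
  gmulA : forall a b c, gmul a (gmul b c) = gmul (gmul a b) c;
  gmul1l : forall a, gmul gone a = a;
  gmul1r : forall a, gmul a gone = a;
  gmulVl : forall a, gmul (ginv a) a = gone;
  gmulVr : forall a, gmul a (ginv a) = gone
}.

Record GModule (Gp : Group) := {
  mcar : Type;
  madd : mcar -> mcar -> mcar;
  mzero : mcar;
  mopp : mcar -> mcar;
  maddA : forall a b c, madd a (madd b c) = madd (madd a b) c;
  maddC : forall a b, madd a b = madd b a;
  madd0 : forall a, madd a mzero = a;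
  maddN : forall a, madd a (mopp a) = mzero;
  act : gcar Gp -> mcar -> mcar;
  act_add : forall g a b, act g (madd a b) = madd (act g a) (act g b);
  act_one : forall a, act (gone Gp) a = a;
  act_mul : forall g h a, act (gmul Gp g h) a = act g (act h a)
}.
Arguments madd {Gp} _ _ _.
Arguments mzero {Gp} _.
Arguments mopp {Gp} _ _.
Arguments act {Gp} _ _ _.

Definition discrete_data (Gp : Group) : TwoGroupData :=
  {| ob := gcar Gp;
     hom := fun x y => x = y;
     idm := fun x => eq_refl;
     comp := fun x y z g f => eq_trans f g;
     tens := gmul Gp;
     tensm := fun x x' y y' f f' => f_equal2 (gmul Gp) f f';
     unit := gone Gp;
     assoc := fun x y z => gmulA Gp x y z;
     lunit := fun x => gmul1l Gp x;
     runit := fun x => gmul1r Gp x |}.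

Lemma discrete_laws (Gp : Group) : is_2group (discrete_data Gp).
Proof.
  split; intros; simpl in *; try apply proof_irrelevance.
  - exists (eq_sym f); split; apply proof_irrelevance.
  - exists (ginv Gp x); split; constructor; simpl.
    + apply gmulVr.
    + apply gmulVl.
Qed.

Definition discrete (Gp : Group) : TwoGroup :=
  {| tg_data := discrete_data Gp; tg_laws := discrete_laws Gp |}.

(* Elementary 2-group A[1] x| G[0]. Morphisms g -> h are pairs (a, proof g = h). *)
Section Elementary.
Variables (Gp : Group) (A : GModule Gp).

Definition elem_data : TwoGroupData :=
  {| ob := gcar Gp;
     hom := fun g h => (mcar A * (g = h))%type;
     idm := fun g => (mzero A, eq_refl);
     comp := fun x y z g f => (madd A (fst g) (fst f), eq_trans (snd f) (snd g));
     tens := gmul Gp;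
     tensm := fun x x' y y' f f' =>
                (madd A (fst f) (act A x (fst f')), f_equal2 (gmul Gp) (snd f) (snd f'));
     unit := gone Gp;
     assoc := fun x y z => (mzero A, gmulA Gp x y z);
     lunit := fun x => (mzero A, gmul1l Gp x);
     runit := fun x => (mzero A, gmul1r Gp x) |}.

Lemma elem_hom_ext (g h : gcar Gp) (f f' : (mcar A * (g = h))%type) :
  fst f = fst f' -> f = f'.
Proof.
  destruct f as [a e], f' as [a' e']; simpl; intros ->.
  f_equal; apply proof_irrelevance.
Qed.

Lemma m0add a : madd A (mzero A) a = a.
Proof. rewrite maddC; apply madd0. Qed.

Lemma act0 g : act A g (mzero A) = mzero A.
Proof.
  assert (H : act A g (mzero A) = madd A (act A g (mzero A)) (act A g (mzero A))).
  { rewrite <- act_add, madd0; reflexivity. }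
  assert (H2 := f_equal (fun t => madd A t (mopp A (act A g (mzero A)))) H).
  simpl in H2. rewrite maddN, <- maddA, maddN, madd0 in H2. symmetry; exact H2.
Qed.

Lemma elem_laws : is_2group elem_data.
Proof.
  split; intros; simpl.
  - apply elem_hom_ext; simpl; apply m0add.
  - apply elem_hom_ext; simpl; apply madd0.
  - apply elem_hom_ext; simpl; apply maddA.
  - destruct f as [a e]; exists (mopp A a, eq_sym e); split;
      apply elem_hom_ext; simpl; [rewrite maddC|]; apply maddN.
  - apply elem_hom_ext; simpl; rewrite act0; apply madd0.
  - apply elem_hom_ext; simpl. destruct f as [a e]; simpl; subst y.
    rewrite act_add. rewrite !maddA. f_equal. rewrite <- !maddA. f_equal.
    apply maddC.
  - apply elem_hom_ext; simpl. rewrite m0add, madd0, act_add, act_mul, maddA.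
    reflexivity.
  - apply elem_hom_ext; simpl. rewrite act_one, !m0add, madd0; reflexivity.
  - apply elem_hom_ext; simpl. rewrite act0, madd0, m0add; reflexivity.
  - apply elem_hom_ext; simpl. rewrite !act0, !madd0; reflexivity.
  - apply elem_hom_ext; simpl. rewrite !act0, !madd0; reflexivity.
  - exists (ginv Gp x); split; constructor; simpl.
    + exact (mzero A, gmulVr Gp x).
    + exact (mzero A, gmulVl Gp x).
Qed.

Definition elementary : TwoGroup :=
  {| tg_data := elem_data; tg_laws := elem_laws |}.

End Elementary.

Definition is_split (G : TwoGroupData) : Prop :=
  exists (Gp : Group) (A : GModule Gp), equiv2 G (elementary A).

(* pi_0(G): isomorphism classes of objects, as a genuine quotient:     *)
(* a class is a predicate on objects of the form [x] = {y | x ~= y}.   *)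
Section Pi0.
Variable G : TwoGroup.

Definition iso_class (x : ob G) : ob G -> Prop := fun y => inhabited (hom x y).

Definition pi0 : Type := { P : ob G -> Prop | exists x, P = iso_class x }.

Definition cls (x : ob G) : pi0 := exist _ (iso_class x) (ex_intro _ x eq_refl).

Definition in_class (y : ob G) (p : pi0) : Prop := proj1_sig p y.

Definition rep (p : pi0) : ob G :=
  proj1_sig (constructive_indefinite_description _ (proj2_sig p)).

Lemma iso_sym (x y : ob G) : inhabited (hom x y) -> inhabited (hom y x).
Proof.
  intros [f]. destruct (groupoid (tg_laws G) _ _ f) as [g _]. exact (inhabits g).
Qed.
Arguments iso_sym {x y} _.


Lemma iso_trans (x y z : ob G) :
  inhabited (hom x y) -> inhabited (hom y z) -> inhabited (hom x z).
Proof. intros [f] [g]. exact (inhabits (comp g f)). Qed.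
Arguments iso_trans {x y z} _ _.


Lemma cls_eq (x y : ob G) : inhabited (hom x y) -> cls x = cls y.
Proof.
  intros H. unfold cls. apply subset_eq_compat.
  apply functional_extensionality; intros z; apply propositional_extensionality.
  unfold iso_class; split; intros H'.
  - exact (iso_trans (iso_sym H) H').
  - exact (iso_trans H H').
Qed.
Arguments cls_eq {x y} _.


Lemma cls_eq_inv (x y : ob G) : cls x = cls y -> inhabited (hom x y).
Proof.
  intros E. assert (E' := f_equal (fun p => proj1_sig p y) E). simpl in E'.
  unfold iso_class in E'. rewrite E'. exact (inhabits (idm y)).
Qed.
Arguments cls_eq_inv {x y} _.


Lemma cls_rep (p : pi0) : cls (rep p) = p.
Proof.
  destruct p as [P H]. unfold rep; simpl.
  destruct (constructive_indefinite_description _ H) as [x Hx]; simpl.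
  unfold cls; apply subset_eq_compat. symmetry; exact Hx.
Qed.

Lemma tens_iso (x x' y y' : ob G) :
  inhabited (hom x y) -> inhabited (hom x' y') -> inhabited (hom (tens x x') (tens y y')).
Proof. intros [f] [f']. exact (inhabits (tensm f f')). Qed.
Arguments tens_iso {x x' y y'} _ _.


Definition pi0_mul (p q : pi0) : pi0 := cls (tens (rep p) (rep q)).
Definition pi0_one : pi0 := cls unit.
Definition pi0_inv (p : pi0) : pi0 :=
  cls (proj1_sig (constructive_indefinite_description _ (weak_inv (tg_laws G) (rep p)))).

Lemma pi0_mul_cls (x y : ob G) : pi0_mul (cls x) (cls y) = cls (tens x y).
Proof.
  unfold pi0_mul; apply cls_eq; apply tens_iso; apply cls_eq_inv; apply cls_rep.
Qed.

Lemma pi0_ind (Q : pi0 -> Prop) : (forall x, Q (cls x)) -> forall p, Q p.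
Proof. intros H p; rewrite <- (cls_rep p); apply H. Qed.

Lemma pi0_mulA (p q r : pi0) : pi0_mul p (pi0_mul q r) = pi0_mul (pi0_mul p q) r.
Proof.
  revert p q r; refine (pi0_ind _ _); intros x; refine (pi0_ind _ _); intros y;
  refine (pi0_ind _ _); intros z.
  rewrite !pi0_mul_cls; apply cls_eq; exact (inhabits (assoc x y z)).
Qed.

Lemma pi0_mul1l (p : pi0) : pi0_mul pi0_one p = p.
Proof.
  revert p; refine (pi0_ind _ _); intros x; unfold pi0_one; rewrite pi0_mul_cls.
  apply cls_eq; exact (inhabits (lunit x)).
Qed.

Lemma pi0_mul1r (p : pi0) : pi0_mul p pi0_one = p.
Proof.
  revert p; refine (pi0_ind _ _); intros x; unfold pi0_one; rewrite pi0_mul_cls.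
  apply cls_eq; exact (inhabits (runit x)).
Qed.

Lemma pi0_mulVl (p : pi0) : pi0_mul (pi0_inv p) p = pi0_one.
Proof.
  unfold pi0_inv.
  destruct (constructive_indefinite_description _ (weak_inv (tg_laws G) (rep p)))
    as [y [H1 H2]]; simpl.
  rewrite <- (cls_rep p). rewrite pi0_mul_cls. apply cls_eq; exact H2.
Qed.

Lemma pi0_mulVr (p : pi0) : pi0_mul p (pi0_inv p) = pi0_one.
Proof.
  unfold pi0_inv.
  destruct (constructive_indefinite_description _ (weak_inv (tg_laws G) (rep p)))
    as [y [H1 H2]]; simpl.
  rewrite <- (cls_rep p). rewrite pi0_mul_cls. apply cls_eq; exact H1.
Qed.

Definition pi0grp : Group :=
  {| gcar := pi0; gmul := pi0_mul; gone := pi0_one; ginv := pi0_inv;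
     gmulA := pi0_mulA; gmul1l := pi0_mul1l; gmul1r := pi0_mul1r;
     gmulVl := pi0_mulVl; gmulVr := pi0_mulVr |}.

Definition P_data : MonFunData G (discrete pi0grp) :=
  {| fob := fun x : ob G => (cls x : ob (discrete pi0grp));
     fhom := fun x y f => cls_eq (inhabits f);
     fmu := fun x y => pi0_mul_cls x y;
     feta := eq_refl |}.

End Pi0.

Definition eq_hom (G : TwoGroupData) (x y : ob G) (E : x = y) : hom x y :=
  match E in _ = y' return hom x y' with eq_refl => idm x end.

Definition has_coherent_section (G : TwoGroup) : Prop :=
  exists (s : pi0 G -> ob G)
         (mu : forall p q : pi0 G, hom (tens (s p) (s q)) (s (pi0_mul p q))),
    (forall p, in_class (s p) p)
    /\ s (cls G unit) = unit
    /\ forall p q r : pi0 G,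
         comp (mu (pi0_mul p q) r) (comp (tensm (mu p q) (idm (s r))) (assoc (s p) (s q) (s r)))
         = comp (@eq_hom G _ _ (f_equal s (pi0_mulA p q r)))
             (comp (mu p (pi0_mul q r)) (tensm (idm (s p)) (mu q r))).

Definition postnikov_splits (G : TwoGroup) : Prop :=
  exists S : Mor (discrete (pi0grp G)) G,
    mon_iso (comp_data (proj1_sig S) (P_data G)) (id_data _).

(* Everything goes through (3).
   - (1) => (3): an equivalence G ≃ A[1] ⋊ Gp[0] restricts to a strict
     morphism pi_0(G)[0] -> A[1] ⋊ Gp[0], [x] |-> F x; composing with the
     pseudo-inverse gives the splitting.
   - (3) => (1): pi_1(G) = Aut(e) is a pi_0(G)-module, [x] acting by the
     "twist" of x (Eckmann–Hilton and the translations of Aut(e) to Aut(x)).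
     A splitting S induces a morphism pi_1(G)[1] ⋊ pi_0(G)[0] -> G which is
     fully faithful (tensoring with an invertible object is fully faithful)
     and essentially surjective, hence an equivalence.
   - (3) => (2): the objects S p, normalised so that [e] is represented by e.
   - (2) => (3): a coherent section is a semi-monoidal functor
     pi_0(G)[0] -> G, and every semi-monoidal functor between 2-groups
     admits a unit comparison making it monoidal. *)

From Stdlib Require Import ClassicalEpsilon ProofIrrelevance.

Notation "g ∘ f" := (comp g f) (at level 40, left associativity).
Notation "f ⊗ g" := (tensm f g) (at level 35).

Section GroupoidCalculus.
Context {G : TwoGroup}.

Lemma cidl {x y : ob G} (f : hom x y) : idm y ∘ f = f.
Proof. apply (comp_id_l (tg_laws G)). Qed.
Lemma cidr {x y : ob G} (f : hom x y) : f ∘ idm x = f.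
Proof. apply (comp_id_r (tg_laws G)). Qed.
Lemma cA {w x y z : ob G} (h : hom y z) (g : hom x y) (f : hom w x) :
  h ∘ (g ∘ f) = (h ∘ g) ∘ f.
Proof. apply (comp_assoc (tg_laws G)). Qed.
Lemma tid (x y : ob G) : idm x ⊗ idm y = idm (tens x y).
Proof. apply (tensm_id (tg_laws G)). Qed.
Lemma tc {x x' y y' z z' : ob G} (g : hom y z) (g' : hom y' z')
  (f : hom x y) (f' : hom x' y') :
  (g ∘ f) ⊗ (g' ∘ f') = (g ⊗ g') ∘ (f ⊗ f').
Proof. apply (tensm_comp (tg_laws G)). Qed.
Lemma anat {x x' x'' y y' y'' : ob G} (f : hom x y) (f' : hom x' y') (f'' : hom x'' y'') :
  assoc y y' y'' ∘ (f ⊗ (f' ⊗ f'')) = ((f ⊗ f') ⊗ f'') ∘ assoc x x' x''.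
Proof. apply (assoc_nat (tg_laws G)). Qed.
Lemma lnat {x y : ob G} (f : hom x y) : lunit y ∘ (idm unit ⊗ f) = f ∘ lunit x.
Proof. apply (lunit_nat (tg_laws G)). Qed.
Lemma rnat {x y : ob G} (f : hom x y) : runit y ∘ (f ⊗ idm unit) = f ∘ runit x.
Proof. apply (runit_nat (tg_laws G)). Qed.
Lemma pent (w x y z : ob G) :
  assoc (tens w x) y z ∘ assoc w x (tens y z)
  = (assoc w x y ⊗ idm z) ∘ (assoc w (tens x y) z ∘ (idm w ⊗ assoc x y z)).
Proof. apply (pentagon (tg_laws G)). Qed.
Lemma tri (x y : ob G) : (runit x ⊗ idm y) ∘ assoc x unit y = idm x ⊗ lunit y.
Proof. apply (triangle (tg_laws G)). Qed.

Definition inv {x y : ob G} (f : hom x y) : hom y x :=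
  proj1_sig (constructive_indefinite_description _ (groupoid (tg_laws G) x y f)).
Lemma invl {x y : ob G} (f : hom x y) : inv f ∘ f = idm x.
Proof. unfold inv; destruct constructive_indefinite_description as [g [H1 H2]]; exact H1. Qed.
Lemma invr {x y : ob G} (f : hom x y) : f ∘ inv f = idm y.
Proof. unfold inv; destruct constructive_indefinite_description as [g [H1 H2]]; exact H2. Qed.

Lemma invlK {x y z : ob G} (f : hom x y) (g : hom z x) : inv f ∘ (f ∘ g) = g.
Proof. rewrite cA, invl, cidl; reflexivity. Qed.
Lemma invrK {x y z : ob G} (f : hom x y) (g : hom z y) : f ∘ (inv f ∘ g) = g.
Proof. rewrite cA, invr, cidl; reflexivity. Qed.

Lemma canc_l {x y z : ob G} (f : hom y z) (g h : hom x y) : f ∘ g = f ∘ h -> g = h.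
Proof. intros H. rewrite <- (invlK f g), H, invlK. reflexivity. Qed.
Lemma canc_r {x y z : ob G} (f : hom x y) (g h : hom y z) : g ∘ f = h ∘ f -> g = h.
Proof. intros H. rewrite <- (cidr g), <- (cidr h), <- (invr f), !cA, H. reflexivity. Qed.

Lemma inv_uniq {x y : ob G} (f : hom x y) (g : hom y x) : g ∘ f = idm x -> g = inv f.
Proof. intros H. apply (canc_r f). rewrite H, invl. reflexivity. Qed.
Lemma inv_inv {x y : ob G} (f : hom x y) : inv (inv f) = f.
Proof. symmetry. apply inv_uniq. apply invr. Qed.
Lemma inv_comp {x y z : ob G} (g : hom y z) (f : hom x y) : inv (g ∘ f) = inv f ∘ inv g.
Proof. symmetry. apply inv_uniq. rewrite <- cA, (cA (inv g)), invl, cidl, invl. reflexivity. Qed.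
Lemma inv_id (x : ob G) : inv (idm x) = idm x.
Proof. symmetry. apply inv_uniq. apply cidl. Qed.
Lemma inv_t {x x' y y' : ob G} (f : hom x y) (f' : hom x' y') : inv (f ⊗ f') = inv f ⊗ inv f'.
Proof. symmetry. apply inv_uniq. rewrite <- tc, !invl, tid. reflexivity. Qed.

Lemma mv_l {x y z : ob G} (f : hom y z) (g : hom x y) (h : hom x z) :
  g = inv f ∘ h -> f ∘ g = h.
Proof. intros ->. apply invrK. Qed.

Lemma slide1 {x x' y y' : ob G} (f : hom x y) (g : hom x' y') :
  (f ⊗ idm y') ∘ (idm x ⊗ g) = f ⊗ g.
Proof. rewrite <- tc, cidl, cidr. reflexivity. Qed.
Lemma slide2 {x x' y y' : ob G} (f : hom x y) (g : hom x' y') :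
  (idm y ⊗ g) ∘ (f ⊗ idm x') = f ⊗ g.
Proof. rewrite <- tc, cidl, cidr. reflexivity. Qed.
Lemma tc1 {x y z w : ob G} (g : hom y z) (f : hom x y) :
  (g ∘ f) ⊗ idm w = (g ⊗ idm w) ∘ (f ⊗ idm w).
Proof. rewrite <- tc, cidl. reflexivity. Qed.
Lemma tc2 {x y z w : ob G} (g : hom y z) (f : hom x y) :
  idm w ⊗ (g ∘ f) = (idm w ⊗ g) ∘ (idm w ⊗ f).
Proof. rewrite <- tc, cidl. reflexivity. Qed.
Lemma slide_l {x y z w v : ob G} (f : hom x y) (g : hom w v) (h : hom z w) :
  f ⊗ (g ∘ h) = (idm y ⊗ g) ∘ (f ⊗ h).
Proof. rewrite <- tc, cidl. reflexivity. Qed.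
Lemma slide_r {x y z w v : ob G} (f : hom x y) (g : hom w v) (h : hom z w) :
  (g ∘ h) ⊗ f = (g ⊗ idm y) ∘ (h ⊗ f).
Proof. rewrite <- tc, cidl. reflexivity. Qed.
Lemma tcK {w x x' y y' z z' : ob G} (g : hom y z) (g' : hom y' z')
  (f : hom x y) (f' : hom x' y') (k : hom w (tens x x')) :
  (g ⊗ g') ∘ ((f ⊗ f') ∘ k) = ((g ∘ f) ⊗ (g' ∘ f')) ∘ k.
Proof. rewrite tc, cA. reflexivity. Qed.

End GroupoidCalculus.

Ltac norm := repeat progress (rewrite ?inv_comp, ?inv_t, ?inv_inv, ?inv_id, <- ?cA,
  ?invlK, ?invrK, ?invl, ?invr, ?cidl, ?cidr, ?tcK, <- ?tc, ?tid).

Section Coherence.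
Context {G : TwoGroup}.

Lemma faithR {x y : ob G} (f g : hom x y) : f ⊗ idm unit = g ⊗ idm unit -> f = g.
Proof. intros H. apply (canc_r (runit x)). rewrite <- !rnat, H. reflexivity. Qed.
Lemma faithL {x y : ob G} (f g : hom x y) : idm unit ⊗ f = idm unit ⊗ g -> f = g.
Proof. intros H. apply (canc_r (lunit x)). rewrite <- !lnat, H. reflexivity. Qed.

Lemma lunitI (x : ob G) : idm unit ⊗ lunit x = lunit (tens unit x).
Proof. apply (canc_l (lunit x)). rewrite lnat. reflexivity. Qed.
Lemma kelly_lunit (x y : ob G) : lunit (tens x y) = (lunit x ⊗ idm y) ∘ assoc unit x y.
Proof.
  apply faithL. apply (canc_l (assoc unit x y)).
  rewrite <- tri, cA, <- (tid x y), anat.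
  rewrite <- cA, pent, !cA, <- tc1, tri.
  rewrite <- anat, <- cA, <- tc2. reflexivity.
Qed.

Lemma kelly_runit (x y : ob G) :
  runit (tens x y) = (idm x ⊗ runit y) ∘ inv (assoc x y unit).
Proof.
  apply (canc_r (assoc x y unit)). norm. apply faithR.
  apply (canc_r ((assoc x (tens y unit) unit) ∘ (idm x ⊗ assoc y unit unit))).
  rewrite tc1, <- !cA, <- pent, cA, tri, <- (tid x y), <- anat.
  rewrite cA, <- anat, <- cA, <- tc2, tri. reflexivity.
Qed.

Lemma kelly_unit : lunit (@unit G) = runit unit.
Proof.
  apply faithR. apply (canc_r (assoc unit unit unit)).
  rewrite tri, <- kelly_lunit, lunitI. reflexivity.
Qed.

Definition ltrans (x : ob G) (a : hom unit unit) : hom x x :=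
  lunit x ∘ (a ⊗ idm x) ∘ inv (lunit x).
Definition rtrans (x : ob G) (a : hom unit unit) : hom x x :=
  runit x ∘ (idm x ⊗ a) ∘ inv (runit x).

Lemma ltrans_id (x : ob G) : ltrans x (idm unit) = idm x.
Proof. unfold ltrans. rewrite tid, cidr, invr. reflexivity. Qed.
Lemma ltrans_comp (x : ob G) (a b : hom unit unit) : ltrans x (a ∘ b) = ltrans x a ∘ ltrans x b.
Proof. unfold ltrans. rewrite tc1, <- !cA, invlK. reflexivity. Qed.
Lemma rtrans_comp (x : ob G) (a b : hom unit unit) : rtrans x (a ∘ b) = rtrans x a ∘ rtrans x b.
Proof. unfold rtrans. rewrite tc2, <- !cA, invlK. reflexivity. Qed.

Lemma ltrans_nat {x w : ob G} (h : hom x w) (a : hom unit unit) : h ∘ ltrans x a = ltrans w a ∘ h.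
Proof.
  assert (Hinv : inv (lunit w) ∘ h = (idm unit ⊗ h) ∘ inv (lunit x)).
  { apply mv_l. rewrite inv_inv, cA, lnat. norm. reflexivity. }
  unfold ltrans. rewrite <- !cA, Hinv, (cA (a ⊗ idm w)), slide1, <- (slide2 a h), !cA, lnat.
  reflexivity.
Qed.
Lemma rtrans_nat {x w : ob G} (h : hom x w) (a : hom unit unit) : h ∘ rtrans x a = rtrans w a ∘ h.
Proof.
  assert (Hinv : inv (runit w) ∘ h = (h ⊗ idm unit) ∘ inv (runit x)).
  { apply mv_l. rewrite inv_inv, cA, rnat. norm. reflexivity. }
  unfold rtrans. rewrite <- !cA, Hinv, (cA (idm w ⊗ a)), slide2, <- (slide1 h a), !cA, rnat.
  reflexivity.
Qed.

Lemma ltrans_tens (x y : ob G) (a : hom unit unit) : ltrans x a ⊗ idm y = ltrans (tens x y) a.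
Proof.
  unfold ltrans. rewrite !tc1, kelly_lunit, inv_comp, inv_t, inv_id, <- !cA.
  f_equal. f_equal. rewrite <- (tid x y), (cA (assoc unit x y)), anat, <- !cA, invrK.
  reflexivity.
Qed.
Lemma rtrans_tens (x y : ob G) (a : hom unit unit) : rtrans (tens x y) a = idm x ⊗ rtrans y a.
Proof.
  unfold rtrans. rewrite !tc2, kelly_runit, inv_comp, inv_inv, inv_t, inv_id, <- !cA.
  f_equal. rewrite (cA (idm (tens x y) ⊗ a)), <- (tid x y), <- anat, !cA, invl, cidl.
  reflexivity.
Qed.
Lemma ltrans_rtrans (x y : ob G) (a : hom unit unit) : idm x ⊗ ltrans y a = rtrans x a ⊗ idm y.
Proof.
  assert (Htri : forall z w : ob G,
    (idm z ⊗ lunit w) ∘ inv (assoc z unit w) = runit z ⊗ idm w).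
  { intros z w. rewrite <- tri. norm. reflexivity. }
  unfold ltrans, rtrans. rewrite !tc2, !tc1.
  replace (idm x ⊗ inv (lunit y)) with (inv (idm x ⊗ lunit y)) by (rewrite inv_t, inv_id; reflexivity).
  replace (inv (runit x) ⊗ idm y) with (inv (runit x ⊗ idm y)) by (rewrite inv_t, inv_id; reflexivity).
  rewrite <- !Htri.
  rewrite inv_comp, inv_inv, <- !cA. f_equal.
  rewrite (cA ((idm x ⊗ a) ⊗ idm y)), <- anat, !cA, invl, cidl. reflexivity.
Qed.

Lemma ltrans_unit (a : hom (@unit G) unit) : ltrans unit a = a.
Proof. unfold ltrans. rewrite kelly_unit, rnat. norm. reflexivity. Qed.
Lemma rtrans_unit (a : hom (@unit G) unit) : rtrans unit a = a.
Proof. unfold rtrans. rewrite <- kelly_unit, lnat. norm. reflexivity. Qed.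

(* Eckmann–Hilton: the automorphism group of the unit is commutative. *)
Lemma aut_unit_comm (a b : hom (@unit G) unit) : a ∘ b = b ∘ a.
Proof.
  assert (Ha : a = lunit unit ∘ (a ⊗ idm unit) ∘ inv (lunit unit))
    by (symmetry; apply ltrans_unit).
  assert (Hb : b = lunit unit ∘ (idm unit ⊗ b) ∘ inv (lunit unit))
    by (rewrite kelly_unit; symmetry; apply rtrans_unit).
  rewrite Ha, Hb at 1. rewrite Ha at 2. rewrite Hb at 2. norm.
  reflexivity.
Qed.

End Coherence.

Section TensorFullyFaithful.
Context {G : TwoGroup}.

(* f ⊗ 1_z can be transported along an isomorphism z ≅ w and across the
   associator; these are the two moves used to cancel z against its inverse. *)
Lemma tens_idm_conj {u v z w : ob G} (f : hom u v) (psi : hom z w) :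
  f ⊗ idm z = inv (idm v ⊗ psi) ∘ (f ⊗ idm w) ∘ (idm u ⊗ psi).
Proof. rewrite <- cA, slide1, <- (slide2 f psi), invlK. reflexivity. Qed.

Lemma tens_idm_assoc {p q : ob G} (f : hom p q) z u :
  f ⊗ idm (tens z u) = inv (assoc q z u) ∘ ((f ⊗ idm z) ⊗ idm u) ∘ assoc p z u.
Proof. rewrite <- cA, <- anat, tid, invlK. reflexivity. Qed.

(* Faithfulness: cancel z against w, reducing to tensoring with e. *)
Lemma tens_faithful (z w : ob G) : inhabited (hom (tens z w) unit) ->
  forall (u v : ob G) (f g : hom u v), f ⊗ idm z = g ⊗ idm z -> f = g.
Proof.
  intros [phi] u v f g H. apply faithR.
  rewrite (tens_idm_conj f (inv phi)), (tens_idm_conj g (inv phi)).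
  rewrite (tens_idm_assoc f), (tens_idm_assoc g), H. reflexivity.
Qed.

(* Fullness: the preimage of c is read off c ⊗ 1_w after identifying z ⊗ w with e. *)
Lemma tens_full (z w : ob G) :
  inhabited (hom (tens z w) unit) -> inhabited (hom (tens w z) unit) ->
  forall (u v : ob G) (c : hom (tens u z) (tens v z)), exists f : hom u v, f ⊗ idm z = c.
Proof.
  intros [phi] Hwz u v c.
  set (d := inv (assoc v z w) ∘ (c ⊗ idm w) ∘ assoc u z w).
  set (e := (idm v ⊗ phi) ∘ d ∘ inv (idm u ⊗ phi)).
  exists (runit v ∘ e ∘ inv (runit u)).
  apply (tens_faithful w z Hwz).
  assert (He : (runit v ∘ e ∘ inv (runit u)) ⊗ idm unit = e).
  { apply (canc_l (runit v)). rewrite rnat. norm. reflexivity. }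
  apply (canc_r (assoc u z w)), (canc_l (inv (assoc v z w))).
  rewrite !cA, <- tens_idm_assoc, (tens_idm_conj _ phi), He. unfold e, d. norm. reflexivity.
Qed.

Lemma tens_full_weak_inv (z : ob G) {u v : ob G} (c : hom (tens u z) (tens v z)) :
  exists f : hom u v, f ⊗ idm z = c.
Proof.
  destruct (weak_inv (tg_laws G) z) as [w [Hzw Hwz]]. exact (tens_full z w Hzw Hwz u v c).
Qed.

Lemma ltrans_inj (x : ob G) (a b : hom unit unit) : ltrans x a = ltrans x b -> a = b.
Proof.
  intros H. destruct (weak_inv (tg_laws G) x) as [y [H1 _]].
  apply (tens_faithful x y H1). unfold ltrans in H.
  apply (canc_l (lunit x)). apply (canc_r (inv (lunit x))). exact H.
Qed.

Lemma ltrans_surj (x : ob G) (c : hom x x) : exists a, ltrans x a = c.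
Proof.
  destruct (tens_full_weak_inv x (inv (lunit x) ∘ c ∘ lunit x)) as [a Ha].
  exists a. unfold ltrans. rewrite Ha. norm. reflexivity.
Qed.

Definition ltrans_inv (x : ob G) (c : hom x x) : hom (@unit G) unit :=
  proj1_sig (constructive_indefinite_description _ (ltrans_surj x c)).
Lemma ltrans_inv_spec (x : ob G) (c : hom x x) : ltrans x (ltrans_inv x c) = c.
Proof. unfold ltrans_inv. destruct constructive_indefinite_description. assumption. Qed.

(* The action of the object x on Aut(e): twist x a is the unique b with
   ltrans x b = rtrans x a, i.e. "x ⊗ a = (x ▷ a) ⊗ x". *)
Definition twist (x : ob G) (a : hom (@unit G) unit) : hom (@unit G) unit :=
  ltrans_inv x (rtrans x a).
Lemma twist_spec (x : ob G) (a : hom unit unit) : ltrans x (twist x a) = rtrans x a.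
Proof. apply ltrans_inv_spec. Qed.

Lemma twist_iso {x w : ob G} : inhabited (hom x w) -> forall a : hom unit unit, twist x a = twist w a.
Proof.
  intros [h] a. apply (ltrans_inj w). rewrite twist_spec. apply (canc_r h).
  rewrite <- ltrans_nat, <- rtrans_nat, twist_spec. reflexivity.
Qed.

Lemma twist_comp (x : ob G) (a b : hom unit unit) : twist x (a ∘ b) = twist x a ∘ twist x b.
Proof. apply (ltrans_inj x). rewrite ltrans_comp, !twist_spec, rtrans_comp. reflexivity. Qed.
Lemma twist_unit (a : hom (@unit G) unit) : twist unit a = a.
Proof. apply (ltrans_inj unit). rewrite twist_spec, ltrans_unit, rtrans_unit. reflexivity. Qed.
Lemma twist_tens (x y : ob G) (a : hom unit unit) : twist (tens x y) a = twist x (twist y a).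
Proof.
  apply (ltrans_inj (tens x y)).
  rewrite twist_spec, <- ltrans_tens, twist_spec, <- ltrans_rtrans, twist_spec, rtrans_tens.
  reflexivity.
Qed.

End TensorFullyFaithful.

(* pi_1(G) = Aut(e) is canonically a left pi_0(G)-module: [x] acts by twist x,
   which is well defined since twist x only depends on the class of x. *)
Section Pi1Module.
Variable G : TwoGroup.

Lemma twist_rep (x : ob G) (p : pi0 G) (a : hom unit unit) :
  cls G x = p -> twist (rep p) a = twist x a.
Proof. intros <-. apply twist_iso, cls_eq_inv, cls_rep. Qed.

Definition pi1_module : GModule (pi0grp G).
Proof.
  refine (@Build_GModule (pi0grp G) (hom (@unit G) unit) (fun a b => a ∘ b) (idm unit)
            inv _ _ _ _ (fun p a => twist (rep p) a) _ _ _).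
  - intros; apply cA.
  - intros; apply aut_unit_comm.
  - intros; apply cidr.
  - intros; apply invr.
  - intros; apply twist_comp.
  - intros a. simpl. rewrite (twist_rep unit); [apply twist_unit | reflexivity].
  - intros p q a. simpl. rewrite (twist_rep (tens (rep p) (rep q))); [|reflexivity].
    apply twist_tens.
Defined.

End Pi1Module.
Record is_semimonfun {G H : TwoGroupData} (F : MonFunData G H) : Prop := {
  sm_id : forall x : ob G, fhom F (idm x) = idm (fob F x);
  sm_comp : forall (x y z : ob G) (g : hom y z) (f : hom x y),
      fhom F (comp g f) = comp (fhom F g) (fhom F f);
  sm_nat : forall (x x' y y' : ob G) (f : hom x y) (f' : hom x' y'),
      comp (fmu F y y') (tensm (fhom F f) (fhom F f'))
      = comp (fhom F (tensm f f')) (fmu F x x');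
  sm_assoc : forall x y z : ob G,
      comp (fhom F (assoc x y z)) (comp (fmu F x (tens y z)) (tensm (idm (fob F x)) (fmu F y z)))
      = comp (fmu F (tens x y) z)
          (comp (tensm (fmu F x y) (idm (fob F z))) (assoc (fob F x) (fob F y) (fob F z)))
}.
Arguments sm_id {G H F} _ _.
Arguments sm_comp {G H F} _ {x y z} _ _.
Arguments sm_nat {G H F} _ {x x' y y'} _ _.
Arguments sm_assoc {G H F} _ _ _ _.

Lemma semimonfun_of_monfun {G H : TwoGroupData} {F : MonFunData G H} :
  is_monfun F -> is_semimonfun F.
Proof. intros []; split; assumption. Qed.

Section SemiMonoidal.
Context {G H : TwoGroup} {F : MonFunData G H} (HF : is_semimonfun F).

Lemma fhom_inv {x y : ob G} (f : hom x y) : fhom F (inv f) = inv (fhom F f).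
Proof. apply inv_uniq. rewrite <- (sm_comp HF), invl, (sm_id HF). reflexivity. Qed.

Lemma fmu_nat1 {x y : ob G} (f : hom x y) (x' : ob G) :
  fmu F y x' ∘ (fhom F f ⊗ idm (fob F x')) = fhom F (f ⊗ idm x') ∘ fmu F x x'.
Proof. rewrite <- (sm_id HF x'), (sm_nat HF). reflexivity. Qed.
Lemma fmu_nat2 {x' y' : ob G} (f : hom x' y') (x : ob G) :
  fmu F x y' ∘ (idm (fob F x) ⊗ fhom F f) = fhom F (idm x ⊗ f) ∘ fmu F x x'.
Proof. rewrite <- (sm_id HF x), (sm_nat HF). reflexivity. Qed.

Lemma fhom_tensm {a a' b b' : ob G} (u : hom a b) (v : hom a' b') :
  fhom F (u ⊗ v) = fmu F b b' ∘ (fhom F u ⊗ fhom F v) ∘ inv (fmu F a a').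
Proof. rewrite (sm_nat HF). norm. reflexivity. Qed.

Lemma fhom_assoc (a b c : ob G) : fhom F (assoc a b c) =
  fmu F (tens a b) c ∘ (fmu F a b ⊗ idm _) ∘ assoc _ _ _
  ∘ inv (idm _ ⊗ fmu F b c) ∘ inv (fmu F a (tens b c)).
Proof.
  apply (canc_r (fmu F a (tens b c) ∘ (idm _ ⊗ fmu F b c))).
  rewrite <- cA, (sm_assoc HF). norm. reflexivity.
Qed.

End SemiMonoidal.

Section Monoidal.
Context {G H : TwoGroup} {F : MonFunData G H} (HF : is_monfun F).

Lemma fhom_lunit (a : ob G) :
  fhom F (lunit a) = lunit (fob F a) ∘ inv (feta F ⊗ idm _) ∘ inv (fmu F unit a).
Proof. rewrite <- (fmu_lunit HF a). norm. reflexivity. Qed.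
Lemma fhom_runit (a : ob G) :
  fhom F (runit a) = runit (fob F a) ∘ inv (idm _ ⊗ feta F) ∘ inv (fmu F a unit).
Proof. rewrite <- (fmu_runit HF a). norm. reflexivity. Qed.

End Monoidal.

Lemma comp_monfun {G H K : TwoGroup} {F : MonFunData G H} {L : MonFunData H K} :
  is_monfun F -> is_monfun L -> is_monfun (comp_data F L).
Proof.
  intros HF HL.
  assert (SL := semimonfun_of_monfun HL).
  split; simpl; intros.
  - rewrite (fhom_id HF), (fhom_id HL). reflexivity.
  - rewrite (fhom_comp HF), (fhom_comp HL). reflexivity.
  - rewrite <- cA, (fmu_nat HL), cA, <- (fhom_comp HL), (fmu_nat HF), (fhom_comp HL), <- cA.
    reflexivity.
  - rewrite tc2, tc1, <- !cA.
    rewrite (cA (fmu L _ _) (idm _ ⊗ _)), (fmu_nat2 SL).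
    rewrite !cA, <- !(fhom_comp HL), <- (cA (fhom F _)), (fmu_assoc HF), !(fhom_comp HL), <- !cA.
    rewrite (fmu_assoc HL), !cA. f_equal. rewrite <- !cA. f_equal.
    rewrite !cA, (fmu_nat1 SL). reflexivity.
  - rewrite tc1, <- !cA, (cA (fmu L _ _) (fhom L _ ⊗ _)), (fmu_nat1 SL).
    rewrite !cA, <- !(fhom_comp HL), <- (cA (fhom F _)), (fmu_lunit HF), <- (cA (fhom L _)),
      (fmu_lunit HL).
    reflexivity.
  - rewrite tc2, <- !cA, (cA (fmu L _ _) (_ ⊗ fhom L _)), (fmu_nat2 SL).
    rewrite !cA, <- !(fhom_comp HL), <- (cA (fhom F _)), (fmu_runit HF), <- (cA (fhom L _)),
      (fmu_runit HL).
    reflexivity.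
Qed.

(* Every semi-monoidal functor between 2-groups becomes a morphism of 2-groups
   once its unit comparison eta : e -> F e is chosen so that the left unit law
   holds at the unit object; both unit laws then follow everywhere from
   associativity.  Such an eta exists because tensoring with F e is full. *)
Section UnitComparison.
Context {D G : TwoGroup} {F : MonFunData D G} (HF : is_semimonfun F).

Definition with_unit (eta : hom unit (fob F unit)) : MonFunData D G :=
  {| fob := fob F; fhom := fun x y f => fhom F f; fmu := fmu F; feta := eta |}.

Lemma unit_comparison_exists : exists eta : hom unit (fob F unit),
  fhom F (lunit unit) ∘ (fmu F unit unit ∘ (eta ⊗ idm (fob F unit))) = lunit (fob F unit).
Proof.
  destruct (tens_full_weak_inv (fob F unit)
              (inv (fhom F (lunit unit) ∘ fmu F unit unit) ∘ lunit (fob F unit))) as [eta Heta].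
  exists eta. rewrite Heta. norm. reflexivity.
Qed.

Variable eta : hom unit (fob F unit).
Hypothesis Heta :
  fhom F (lunit unit) ∘ (fmu F unit unit ∘ (eta ⊗ idm (fob F unit))) = lunit (fob F unit).

Lemma mu_eta_eta :
  fmu F unit unit ∘ (eta ⊗ eta) = inv (fhom F (lunit unit)) ∘ (eta ∘ lunit unit).
Proof.
  apply (canc_l (fhom F (lunit unit))). rewrite invrK, <- (slide1 eta eta).
  rewrite (cA (fmu F _ _)), (cA (fhom F _)), Heta, lnat. reflexivity.
Qed.

(* With phi the left unit candidate at x, associativity at (e, e, x) and
   Kelly's lemma give phi ∘ (1 ⊗ phi) = phi ∘ (1 ⊗ λ); cancel phi. *)
Lemma unit_law_left (x : ob D) :
  fhom F (lunit x) ∘ (fmu F unit x ∘ (eta ⊗ idm (fob F x))) = lunit (fob F x).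
Proof.
  set (phi := fhom F (lunit x) ∘ (fmu F unit x ∘ (eta ⊗ idm (fob F x)))).
  assert (Hphi : phi ∘ (idm unit ⊗ phi) = phi ∘ (idm unit ⊗ lunit (fob F x))).
  { unfold phi. norm. rewrite slide_l, (cA (fmu F unit x)), (fmu_nat2 HF).
    rewrite lunitI, kelly_lunit, (sm_comp HF). norm.
    rewrite (slide_l eta (fmu F unit x)), (cA (fmu F unit (tens unit x))).
    rewrite (cA (fhom F (assoc _ _ _))), (sm_assoc HF). norm.
    rewrite anat. norm. rewrite mu_eta_eta, (cA (fhom F (lunit unit ⊗ idm x))), <- (fmu_nat1 HF).
    rewrite <- (slide1 eta (lunit (fob F x))), lunitI, kelly_lunit. norm.
    reflexivity. }
  apply faithL, (canc_l phi), Hphi.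
Qed.

(* With psi the right unit candidate at x, associativity at (x, e, e) and the
   triangle give psi ∘ (psi ⊗ 1) ∘ α = psi ∘ (1 ⊗ λ) = psi ∘ (ρ ⊗ 1) ∘ α. *)
Lemma unit_law_right (x : ob D) :
  fhom F (runit x) ∘ (fmu F x unit ∘ (idm (fob F x) ⊗ eta)) = runit (fob F x).
Proof.
  set (psi := fhom F (runit x) ∘ (fmu F x unit ∘ (idm (fob F x) ⊗ eta))).
  assert (Hpsi : psi ∘ ((psi ⊗ idm unit) ∘ assoc (fob F x) unit unit)
                 = psi ∘ (idm (fob F x) ⊗ lunit unit)).
  { unfold psi. norm.
    rewrite (slide_r eta (fhom F (runit x))), <- !cA.
    rewrite (cA (fmu F x unit) (fhom F (runit x) ⊗ _)), (fmu_nat1 HF).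
    rewrite (slide_r eta (fmu F x unit)), <- !cA, <- anat.
    rewrite (cA (fmu F x unit ⊗ _)), (cA (fmu F (tens x unit) unit)), <- (sm_assoc HF). norm.
    rewrite mu_eta_eta, <- (fhom_inv HF), (slide_l (idm _) (fhom F _)).
    rewrite (cA (fmu F x _)), (fmu_nat2 HF).
    rewrite <- !cA, (cA (fhom F (assoc _ _ _))), <- (sm_comp HF).
    rewrite (cA (fhom F (runit x ⊗ _))), <- (sm_comp HF), (cA (runit x ⊗ idm unit)), tri.
    norm. rewrite (sm_id HF). norm.
    reflexivity. }
  apply faithR, (canc_r (assoc (fob F x) unit unit)). rewrite tri. apply (canc_l psi), Hpsi.
Qed.

Lemma with_unit_monfun : is_monfun (with_unit eta).
Proof.
  split; simpl.
  - exact (sm_id HF).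
  - intros; apply (sm_comp HF).
  - intros; apply (sm_nat HF).
  - exact (sm_assoc HF).
  - exact unit_law_left.
  - exact unit_law_right.
Qed.

End UnitComparison.

Lemma semimonfun_upgrade {D G : TwoGroup} {F : MonFunData D G} :
  is_semimonfun F -> exists eta, is_monfun (@with_unit _ _ F eta).
Proof.
  intros HF. destruct (@unit_comparison_exists _ _ F) as [eta Heta].
  exists eta. exact (with_unit_monfun HF eta Heta).
Qed.

(* A morphism of 2-groups K : E -> G which is fully faithful (with chosen
   preimages Kinv of morphisms) and essentially surjective (each x comes with
   psi x : x ≅ K (F0 x)) is an equivalence: F0 extends to a pseudo-inverse by
   transporting the structure of G along psi. *)
Section FullyFaithfulEquivalence.
Context {E G : TwoGroup} (K : MonFunData E G) (HK : is_monfun K)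
  (Kinv : forall a b, hom (fob K a) (fob K b) -> hom a b)
  (K_Kinv : forall a b (h : hom (fob K a) (fob K b)), fhom K (Kinv a b h) = h)
  (K_inj : forall a b (f g : hom a b), fhom K f = fhom K g -> f = g)
  (F0 : ob G -> ob E) (psi : forall x, hom x (fob K (F0 x))).

Definition pseudo_inverse : MonFunData G E :=
  {| fob := F0;
     fhom := fun x y f => Kinv _ _ (psi y ∘ f ∘ inv (psi x));
     fmu := fun x y => Kinv _ _ (psi (tens x y) ∘ (inv (psi x) ⊗ inv (psi y))
                                ∘ inv (fmu K (F0 x) (F0 y)));
     feta := Kinv _ _ (psi unit ∘ inv (feta K)) |}.

Let SK := semimonfun_of_monfun HK.

Ltac push_K := repeat (rewrite ?(fhom_comp HK), ?(fhom_id HK), ?(fhom_tensm SK), ?K_Kinv); norm.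

Lemma pseudo_inverse_monfun : is_monfun pseudo_inverse.
Proof.
  split; intros; apply K_inj; simpl; push_K; try reflexivity.
  - rewrite (fhom_assoc SK). norm.
    rewrite (cA ((inv (psi x) ⊗ inv (psi y)) ⊗ inv (psi z))), <- anat. norm. reflexivity.
  - rewrite (fhom_lunit HK), (cA (psi x) (lunit x)), <- lnat. norm. reflexivity.
  - rewrite (fhom_runit HK), (cA (psi x) (runit x)), <- rnat. norm. reflexivity.
Qed.

Lemma equiv_of_fully_faithful : equiv2 G E.
Proof.
  exists (exist _ pseudo_inverse pseudo_inverse_monfun), (exist _ K HK). simpl. split.
  - exists (fun x => inv (psi x)). split; [|split]; simpl; intros; push_K; reflexivity.
  - exists (fun a => Kinv _ _ (inv (psi (fob K a)))).
    split; [|split]; simpl; intros; apply K_inj; push_K; reflexivity.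
Qed.

End FullyFaithfulEquivalence.

(* A splitting S of the Postnikov sequence yields a fully
   faithful, essentially surjective morphism from the elementary 2-group
   pi_1(G)[1] ⋊ pi_0(G)[0] to G: (a, p = q) is sent to S(p = q) ∘ ltrans a. *)
Section SplitOfSection.
Context (G : TwoGroup) (S : MonFunData (discrete (pi0grp G)) G) (HS : is_monfun S)
  (S_section : forall p : pi0 G, cls G (fob S p) = p).

Definition elem_to_G : MonFunData (elem_data (pi1_module G)) G :=
  @Build_MonFunData (elem_data (pi1_module G)) G (fun p => fob S p)
     (fun p q (f : @hom (elem_data (pi1_module G)) p q) => fhom S (snd f) ∘ ltrans (fob S p) (fst f))
     (fun p q => fmu S p q) (feta S).

Lemma elem_to_G_monfun : is_monfun elem_to_G.
Proof.
  split; simpl.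
  - intros. rewrite ltrans_id, cidr. apply (fhom_id HS x).
  - intros x y z [b E2] [a E1]; simpl. destruct E1, E2. simpl.
    rewrite !(fhom_id HS), !cidl. apply ltrans_comp.
  - intros x x' y y' [a E] [a' E']; simpl. destruct E, E'. simpl.
    rewrite (proof_irrelevance _ (f_equal2 _ _ _) eq_refl), !(fhom_id HS), !cidl.
    rewrite (twist_rep G (fob S x) x a' (S_section x)).
    rewrite <- ltrans_nat, ltrans_comp, <- !ltrans_tens, twist_spec, <- ltrans_rtrans, slide1.
    reflexivity.
  - intros. rewrite ltrans_id, cidr. apply (fmu_assoc HS).
  - intros. rewrite ltrans_id, cidr. apply (fmu_lunit HS).
  - intros. rewrite ltrans_id, cidr. apply (fmu_runit HS).
Qed.

Definition class_eq_of_iso {p q : pi0 G} (h : hom (fob S p) (fob S q)) : p = q :=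
  eq_trans (eq_sym (S_section p)) (eq_trans (cls_eq G _ _ (inhabits h)) (S_section q)).

Definition elem_to_G_inv (p q : pi0 G) (h : hom (fob S p) (fob S q))
  : @hom (elem_data (pi1_module G)) p q :=
  (ltrans_inv (fob S p) (inv (fhom S (class_eq_of_iso h)) ∘ h), class_eq_of_iso h).

Lemma split_of_section : is_split G.
Proof.
  exists (pi0grp G), (pi1_module G).
  refine (@equiv_of_fully_faithful (elementary (pi1_module G)) G elem_to_G elem_to_G_monfun
    elem_to_G_inv _ _ (cls G)
    (fun x => inv (epsilon (cls_eq_inv (S_section (cls G x))) (fun _ => True)))).
  - intros p q h. simpl. rewrite ltrans_inv_spec. apply invrK.
  - intros p q [u E] [u' E'] H. simpl in H.
    assert (E = E') by apply proof_irrelevance. subst E'.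
    apply elem_hom_ext. simpl. apply canc_l, ltrans_inj in H. exact H.
Qed.

End SplitOfSection.

Lemma discrete_hom_eq {Gp : Group} {x y : gcar Gp} (a b : @hom (discrete_data Gp) x y) : a = b.
Proof. exact (proof_irrelevance (x = y) a b). Qed.

Lemma cls_of_in_class {G : TwoGroup} (y : ob G) (p : pi0 G) : in_class y p -> cls G y = p.
Proof. intros H. rewrite <- (cls_rep p) in H |- *. symmetry. apply cls_eq. exact H. Qed.
Lemma in_class_of_cls {G : TwoGroup} (y : ob G) (p : pi0 G) : cls G y = p -> in_class y p.
Proof. intros <-. exact (inhabits (idm y)). Qed.

(* (1) => (3).  If F : G -> A[1] ⋊ Gp[0] has pseudo-inverse K, then
   [x] |-> F x extends to a strict morphism pi_0(G)[0] -> A[1] ⋊ Gp[0], and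
   composing it with K splits the Postnikov sequence. *)
Section SectionOfSplit.
Context (G : TwoGroup) (Gp : Group) (A : GModule Gp)
  (F : MonFunData G (elem_data A)) (K : MonFunData (elem_data A) G) (HK : is_monfun K)
  (KF_iso : forall x : ob G, hom (fob K (fob F x)) x).

Definition class_image (p : pi0 G) : gcar Gp := fob F (rep p).

Lemma class_image_cls (x : ob G) : class_image (cls G x) = fob F x.
Proof.
  unfold class_image. destruct (cls_eq_inv (cls_rep (cls G x))) as [f]. exact (snd (fhom F f)).
Qed.

Lemma class_image_mul (p q : pi0 G) :
  gmul Gp (class_image p) (class_image q) = class_image (pi0_mul p q).
Proof. unfold pi0_mul. rewrite class_image_cls. exact (snd (fmu F (rep p) (rep q))). Qed.

Lemma class_image_one : gone Gp = class_image (pi0_one G).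
Proof. unfold pi0_one. rewrite class_image_cls. exact (snd (feta F)). Qed.

Definition class_image_functor : MonFunData (discrete (pi0grp G)) (elem_data A) :=
  @Build_MonFunData (discrete (pi0grp G)) (elem_data A) class_image
    (fun p q (E : p = q) => (mzero A, f_equal class_image E))
    (fun p q => (mzero A, class_image_mul p q))
    (mzero A, class_image_one).

Lemma class_image_monfun : is_monfun class_image_functor.
Proof. split; intros; apply elem_hom_ext; simpl; rewrite ?act0, ?madd0; reflexivity. Qed.

Lemma postnikov_of_split : postnikov_splits G.
Proof.
  exists (exist _ (comp_data class_image_functor K) (@comp_monfun _ (elementary A) _ _ _ class_image_monfun HK)).
  simpl. exists (fun p => eq_trans (cls_eq G _ _ (inhabits (KF_iso (rep p)))) (cls_rep p)).
  split; [|split]; intros; apply discrete_hom_eq.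
Qed.

End SectionOfSplit.

(* (3) => (2).  Restrict a splitting S to objects, replacing S [e] by e
   itself, and conjugate its comparison maps accordingly. *)
Section CoherentSectionOfSplitting.
Context (G : TwoGroup) (S : MonFunData (discrete (pi0grp G)) G) (HS : is_monfun S)
  (S_section : forall p : pi0 G, cls G (fob S p) = p).

Definition normalized_obj (p : pi0 G) : { x : ob G & hom x (fob S p) } :=
  match excluded_middle_informative (p = pi0_one G) with
  | left E => existT (fun x => hom x (fob S p)) unit (fhom S (eq_sym E) ∘ feta S)
  | right _ => existT (fun x => hom x (fob S p)) (fob S p) (idm _)
  end.
Definition sec (p : pi0 G) : ob G := projT1 (normalized_obj p).
Definition sec_iso (p : pi0 G) : hom (sec p) (fob S p) := projT2 (normalized_obj p).

Lemma sec_unit : sec (cls G unit) = unit.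
Proof.
  unfold sec, normalized_obj. destruct excluded_middle_informative as [E|NE].
  - reflexivity.
  - contradiction (NE eq_refl).
Qed.

Definition sec_mu (p q : pi0 G) : hom (tens (sec p) (sec q)) (sec (pi0_mul p q)) :=
  inv (sec_iso (pi0_mul p q)) ∘ fmu S p q ∘ (sec_iso p ⊗ sec_iso q).

Lemma sec_transport (p q : pi0 G) (E : p = q) :
  @eq_hom G _ _ (f_equal sec E) = inv (sec_iso q) ∘ fhom S E ∘ sec_iso p.
Proof.
  destruct E. simpl. assert (S_id := fhom_id HS p). simpl in S_id.
  rewrite S_id, cidr, invl. reflexivity.
Qed.

Lemma coherent_section_of_splitting : has_coherent_section G.
Proof.
  exists sec, sec_mu. split; [|split].
  - intros p. apply in_class_of_cls. rewrite <- (S_section p) at 2.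
    exact (cls_eq G _ _ (inhabits (sec_iso p))).
  - apply sec_unit.
  - intros p q r. unfold sec_mu.
    rewrite (sec_transport _ _ (pi0_mulA p q r)
             : _ = inv (sec_iso _) ∘ fhom S (@assoc (discrete (pi0grp G)) p q r) ∘ sec_iso _).
    rewrite (fhom_assoc (semimonfun_of_monfun HS)). norm. rewrite anat. norm. reflexivity.
Qed.

End CoherentSectionOfSplitting.

(* (2) => (3).  A coherent section is a semi-monoidal functor
   pi_0(G)[0] -> G; upgrading it with a unit comparison splits the sequence. *)
Section SplittingOfCoherentSection.
Context (G : TwoGroup) (s : pi0 G -> ob G)
  (mu : forall p q : pi0 G, hom (tens (s p) (s q)) (s (pi0_mul p q)))
  (s_in : forall p, in_class (s p) p) (s_unit : s (cls G unit) = unit)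
  (mu_coh : forall p q r : pi0 G,
     comp (mu (pi0_mul p q) r) (comp (tensm (mu p q) (idm (s r))) (assoc (s p) (s q) (s r)))
     = comp (@eq_hom G _ _ (f_equal s (pi0_mulA p q r)))
         (comp (mu p (pi0_mul q r)) (tensm (idm (s p)) (mu q r)))).

Lemma eq_hom_refl {x : ob G} (E : x = x) : @eq_hom G _ _ E = idm x.
Proof. rewrite (proof_irrelevance _ E eq_refl). reflexivity. Qed.

(* The unit comparison is provisional: it is replaced by semimonfun_upgrade. *)
Definition section_functor : MonFunData (discrete (pi0grp G)) G :=
  @Build_MonFunData (discrete (pi0grp G)) G s
    (fun p q (E : p = q) => @eq_hom G _ _ (f_equal s E)) mu (@eq_hom G _ _ (eq_sym s_unit)).

Lemma section_semimonfun : is_semimonfun section_functor.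
Proof.
  split; simpl.
  - reflexivity.
  - intros p q r E2 E1. destruct E1, E2. symmetry. apply cidl.
  - intros p p' q q' E E'. destruct E, E'. simpl. rewrite tid, eq_hom_refl, cidl, cidr. reflexivity.
  - intros p q r. symmetry. apply mu_coh.
Qed.

Lemma splitting_of_coherent_section : postnikov_splits G.
Proof.
  destruct (semimonfun_upgrade section_semimonfun) as [eta Heta].
  exists (exist _ _ Heta). simpl.
  exists (fun p => cls_of_in_class (s p) p (s_in p)).
  split; [|split]; intros; apply discrete_hom_eq.
Qed.

End SplittingOfCoherentSection.

Theorem theorem3p13 (G : TwoGroup) :
  (is_split G <-> has_coherent_section G) /\
  (has_coherent_section G <-> postnikov_splits G).
Proof.
  assert (split_postnikov : is_split G -> postnikov_splits G).
  { intros [Gp [A [[F HF] [[K HK] [[KF_iso _] _]]]]].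
    exact (postnikov_of_split _ _ _ F _ HK KF_iso). }
  assert (postnikov_split : postnikov_splits G -> is_split G).
  { intros [[S HS] [S_section _]]. exact (split_of_section _ _ HS S_section). }
  assert (postnikov_section : postnikov_splits G -> has_coherent_section G).
  { intros [[S HS] [S_section _]]. exact (coherent_section_of_splitting _ _ HS S_section). }
  assert (section_postnikov : has_coherent_section G -> postnikov_splits G).
  { intros [s [mu [s_in [s_unit mu_coh]]]].
    exact (splitting_of_coherent_section _ _ _ s_in s_unit mu_coh). }
  tauto.
Qed.
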